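(* Let $X$ be a compact topological space equipped with a continuous action of an infinite strongly sofic monoid $M$, and let $\Sigma=(D_i,\sigma_i)_{i\in I}$ be a strong sofic approximation of $M$. If $\rho$ and $\rho'$ are dynamically generating continuous pseudometrics for $(X,M)$, then $h_\Sigma(X,M,\rho)=h_\Sigma(X,M,\rho')$.
   Context: Hamming metric on $\operatorname{Map}(D)$ (maps $D\to D$, $D$ finite non-empty): $d_D^{\mathrm{Ham}}(f,g)=\frac{1}{|D|}|\{v:f(v)\ne g(v)\}|$. A strong sofic approximation of $M$ is a net $(D_i,\sigma_i)_{i\in I}$ over a directed set, $D_i$ non-empty finite, $\sigma_i\colon M\to\operatorname{Map}(D_i)$, with $\sigma_i(1_M)=\mathrm{Id}_{D_i}$; $\lim_i d^{\mathrm{Ham}}_{D_i}(\sigma_i(m_1m_2),\sigma_i(m_1)\sigma_i(m_2))=0$ for all $m_1,m_2$; $\lim_i d^{\mathrm{Ham}}_{D_i}(\sigma_i(m_1),\sigma_i(m_2))=1$ for distinct $m_1,m_2$; and for every finite $K\subset M$ an integer $\Delta_K\ge1$ with $|\sigma_i(k)^{-1}(v)|\le\Delta_K$ for all $i$, $k\in K$, $v\in D_i$. A monoid is strongly sofic iff it has one. A pseudometric $\rho$ is dynamically generating if for distinct $x,y\in X$ some $m\in M$ has $\rho(mx,my)>0$. For non-empty finite $D$, on $X^D$: $\rho_2^D(\varphi,\psi)=(\frac{1}{|D|}\sum_v\rho(\varphi(v),\psi(v))^2)^{1/2}$, $\rho_\infty^D(\varphi,\psi)=\max_v\rho(\varphi(v),\psi(v))$,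 $(m\varphi)(v)=m\varphi(v)$. For finite $F\subset M$, $\delta>0$, $\sigma\colon M\to\operatorname{Map}(D)$: $\operatorname{Map}(X,M,\rho,F,\delta,\sigma)=\{\varphi\in X^D:\rho_2^D(\varphi\circ\sigma(m),m\varphi)\le\delta\ \forall m\in F\}$. $N_\varepsilon(Z,d)$ is the maximal cardinality of a subset of $Z$ with pairwise $d$-distances $\ge\varepsilon$. $h_\Sigma(X,M,\rho)=\sup_{\varepsilon>0}\inf_F\inf_{\delta>0}\limsup_i\frac{1}{|D_i|}\log N_\varepsilon(\operatorname{Map}(X,M,\rho,F,\delta,\sigma_i),\rho_\infty^{D_i})$, infimum over finite $F\subset M$, $\log 0=-\infty$. *)

From HB Require Import structures.
From mathcomp Require Import all_boot all_order all_algebra.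
From mathcomp Require Import monoid.
From mathcomp Require Import all_classical all_reals all_analysis.
Set Implicit Arguments. Unset Strict Implicit. Unset Printing Implicit Defensive.
Import Order.TTheory GRing.Theory Num.Theory numFieldNormedType.Exports.
Local Open Scope classical_set_scope.
Local Open Scope ring_scope.

Section Defs.
Variable R : realType.

Definition continuous_monoid_action (M : monoidType) (X : topologicalType)
  (act : M -> X -> X) : Prop :=
  [/\ forall m : M, continuous (act m),
      forall x, act 1%g x = x &
      forall (m1 m2 : M) x, act (m1 * m2)%g x = act m1 (act m2 x)].

Definition is_pseudometric (X : Type) (rho : X -> X -> R) : Prop :=
  [/\ forall x, rho x x = 0,
      forall x y, rho x y = rho y x &
      forall x y z, rho x z <= rho x y + rho y z].

Definition continuous_pseudometric (X : topologicalType) (rho : X -> X -> R) : Prop :=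
  is_pseudometric rho /\ continuous (fun p : X * X => rho p.1 p.2).

Definition dynamically_generating (M : monoidType) (X : Type)
  (act : M -> X -> X) (rho : X -> X -> R) : Prop :=
  forall x y : X, x <> y -> exists m : M, 0 < rho (act m x) (act m y).

Definition d_ham (D : finType) (f g : D -> D) : R :=
  (#|[pred v | f v != g v]|%:R) / (#|D|%:R).

Definition directed_set (I : Type) (le : I -> I -> Prop) : Prop :=
  [/\ exists i : I, True,
      forall i, le i i,
      forall i j k, le i j -> le j k -> le i k &
      forall i j, exists k, le i k /\ le j k].

Definition net_lim (I : Type) (le : I -> I -> Prop) (a : I -> R) (l : R) : Prop :=
  forall e : R, 0 < e -> exists i0, forall i, le i0 i -> `|a i - l| < e.

Definition net_limsup (I : Type) (le : I -> I -> Prop) (a : I -> \bar R) : \bar R :=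
  ereal_inf [set ereal_sup [set a i | i in [set i | le i0 i]] | i0 in [set: I]].

Definition strong_sofic_approx (M : monoidType) (I : Type) (le : I -> I -> Prop)
  (D : I -> finType) (sigma : forall i, M -> D i -> D i) : Prop :=
  [/\ directed_set le,
      (forall i, (0 < #|D i|)%N) /\ (forall i, sigma i 1%g = id),
      forall m1 m2 : M,
        net_lim le (fun i => d_ham (sigma i (m1 * m2)%g) (sigma i m1 \o sigma i m2)) 0,
      forall m1 m2 : M, m1 <> m2 ->
        net_lim le (fun i => d_ham (sigma i m1) (sigma i m2)) 1 &
      forall K : set M, finite_set K -> exists Delta : nat, (1 <= Delta)%N /\
        forall i (k : M) (v : D i), K k ->
          (#|[pred w | sigma i k w == v]| <= Delta)%N].

Definition strongly_sofic (M : monoidType) : Prop :=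
  exists (I : Type) (le : I -> I -> Prop) (D : I -> finType)
    (sigma : forall i, M -> D i -> D i), strong_sofic_approx le sigma.

Definition rho2 (X : Type) (rho : X -> X -> R) (D : finType) (phi psi : D -> X) : R :=
  Num.sqrt ((#|D|%:R)^-1 * \sum_(v : D) (rho (phi v) (psi v)) ^+ 2).

Definition rhoinf (X : Type) (rho : X -> X -> R) (D : finType) (phi psi : D -> X) : R :=
  \big[Num.max/0]_(v : D) rho (phi v) (psi v).

Definition MapSet (M : monoidType) (X : Type) (act : M -> X -> X)
  (rho : X -> X -> R) (F : set M) (delta : R) (D : finType)
  (s : M -> D -> D) : set (D -> X) :=
  [set phi : D -> X | forall m, F m -> rho2 rho (fun v => phi (s m v)) (fun v => act m (phi v)) <= delta].

Definition sep_number (T : Type) (d : T -> T -> R) (eps : R) (Z : set T) : \bar R :=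
  ereal_sup [set (n%:R)%:E | n in [set n : nat | exists f : 'I_n -> T,
     [/\ injective f, forall j, Z (f j) &
         forall j k, j != k -> eps <= d (f j) (f k)]]].

Definition elog (x : \bar R) : \bar R :=
  match x with
  | EFin r => if (0 < r)%R then (ln r)%:E else -oo
  | +oo => +oo
  | -oo => -oo
  end%E.

Definition sofic_entropy (M : monoidType) (X : Type) (act : M -> X -> X)
  (I : Type) (le : I -> I -> Prop) (D : I -> finType)
  (sigma : forall i, M -> D i -> D i) (rho : X -> X -> R) : \bar R :=
  ereal_sup [set
    ereal_inf [set
      ereal_inf [set
        net_limsup le (fun i =>
          ((#|D i|%:R)^-1)%:E *
            elog (sep_number (@rhoinf X rho (D i)) eps
                    (MapSet act rho F delta (sigma i))))%E
      | delta in [set delta : R | 0 < delta]]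
    | F in [set F : set M | finite_set F]]
  | eps in [set eps : R | 0 < eps]].

End Defs.

(* By symmetry it suffices to show h(rho) <= h(rho').  Compactness and
   dynamical generation give uniform control: rho' x y is small as soon as
   rho (k x) (k y) is small for the finitely many k of some ks.  Together with
   the approximate multiplicativity and the bounded fibres of a strong sofic
   approximation, this shows that eventually every map which is
   (F, delta)-almost equivariant for rho is (F', delta')-almost equivariant
   for rho'.
   Next, let maps phi be almost equivariant for rho' along ks.  Colour
   phi by recording, at the few points v where phi fails to be
   eta/3-equivariant, the cell of phi v in a finite partition of X into
   rho-small cells.  Two rho_oo-separated maps of the same colour are then
   eta/3-separated for rho'_oo, and counting colourings weighted by
   t ^ (support size) bounds the number of colours that occur by c ^ |D|
   with ln c arbitrarily small.  Hence
   N_eps(., rho_oo) <= c ^ |D| * N_(eta/3)(., rho'_oo), which compares the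
   entropies. *)

From HB Require Import structures.
From mathcomp Require Import all_boot all_order all_algebra.
From mathcomp Require Import monoid.
From mathcomp Require Import all_classical all_reals all_analysis.
From mathcomp Require Import finmap ring lra.
Set Implicit Arguments. Unset Strict Implicit. Unset Printing Implicit Defensive.
Import Order.TTheory GRing.Theory Num.Theory numFieldNormedType.Exports.
Local Open Scope classical_set_scope.
Local Open Scope ring_scope.

Definition pointed_at (X : topologicalType) (x0 : X) : Type := X.
HB.instance Definition _ (X : topologicalType) (x0 : X) :=
  Topological.on (pointed_at x0).
HB.instance Definition _ (X : topologicalType) (x0 : X) :=
  isPointed.Build (pointed_at x0) x0.

(* [compact_cover] is stated for pointed spaces; an empty space is covered by
   the empty subfamily. *)
Lemma compact_cover_compact (X : topologicalType) (A : set X) :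
  compact A -> cover_compact A.
Proof.
move=> cA; have [[x0 _]|nX] := pselect (exists x : X, True).
  have cover_eq := @compact_cover (pointed_at x0).
  by have : cover_compact (A : set (pointed_at x0)) by rewrite -cover_eq.
by move=> I D f _ _; exists fset0 => // x _; case: nX; exists x.
Qed.

Lemma pseudometric_ge0 (R : realType) (X : Type) (d : X -> X -> R) :
  is_pseudometric d -> forall x y, 0 <= d x y.
Proof.
case=> d0 dC dtri x y; have := dtri x y x; rewrite d0 (dC y x) => h.
by rewrite -(@pmulr_rge0 _ 2) // mulr2n mulrDl mul1r.
Qed.

Section ContinuousPseudometric.
Variables (R : realType) (X : topologicalType) (d : X -> X -> R).
Hypothesis cd : continuous_pseudometric d.

Lemma continuous_pseudometricr c : continuous (d c).
Proof.
move=> x; apply: (@continuous_comp _ _ _ (fun y => (c, y)) (fun p : X * X => d p.1 p.2)).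
  by apply: cvg_pair; [exact: cvg_cst|exact: cvg_id].
exact: cd.2.
Qed.

Hypothesis cX : compact [set: X].

Lemma continuous_pseudometric_bounded : exists2 B, 0 < B & forall x y, d x y <= B.
Proof.
have /compact_bounded [B [_ hB]] : compact [set d p.1 p.2 | p in [set: X * X]].
  apply: continuous_compact; last by rewrite -setXTT; exact: compact_setX.
  by apply: continuous_subspaceT => p; exact: cd.2.
exists (Num.max B 0 + 1) => [|x y]; first by rewrite ltr_pwDr // le_max lexx orbT.
have B1 : B < Num.max B 0 + 1 by rewrite ltr_pwDr // le_max lexx.
apply: le_trans (ler_norm _) _; apply: (hB _ B1).
by exists (x, y).
Qed.

Lemma compact_pseudometric_net r : 0 < r ->
  exists cs : seq X, forall x, has (fun c => d c x < r) cs.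
Proof.
move=> r0; have [||cs _ cover] := compact_cover_compact cX (D := setT)
    (f := fun c => [set x | d c x < r]).
- move=> c _; apply: (@open_comp _ _ (d c) [set z : R | z < r]); last exact: open_lt.
  by move=> x _; exact: continuous_pseudometricr.
- by have [[d0 _ _] _] := cd; move=> x _; exists x => //=; rewrite d0.
by exists cs => x; have [c /= ccs dcx] := cover x I; apply/hasP; exists c.
Qed.

Lemma compact_pseudometric_partition eps : 0 < eps ->
  exists N (cell : X -> 'I_N), forall x y, cell x = cell y -> d x y < eps.
Proof.
move=> eps0; have [cs net] := compact_pseudometric_net (divr_gt0 eps0 (ltr0n _ 2)).
pose near_x x := fun c => d c x < eps / 2.
have find_lt x : (find (near_x x) cs < size cs)%N by rewrite -has_find; exact: net.
exists (size cs), (fun x => Ordinal (find_lt x)) => x y [same_find].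
have := nth_find x (net x); have := nth_find y (net y).
rewrite -same_find (set_nth_default x y (find_lt x)) /near_x.
set c := nth x cs _ => dcy dcx.
have [[_ dC dtri] _] := cd; have := dtri x c y; rewrite (dC x c); lra.
Qed.

Lemma dynamically_generating_control (M : monoidType) (act : M -> X -> X)
    (e : X -> X -> R) :
  (forall m, continuous (act m)) -> dynamically_generating act d ->
  continuous_pseudometric e ->
  forall kappa, 0 < kappa -> exists ks : seq M, exists2 eta, 0 < eta &
    forall x y, (forall k, k \in ks -> d (act k x) (act k y) < eta) -> e x y < kappa.
Proof.
move=> cact gd ce kappa kappa0.
(* Cover the compact set where [e >= kappa] by the open sets where
   [d (act m x) (act m y) > 1 / j.+1]. *)
pose far := (fun p : X * X => e p.1 p.2) @^-1` [set z | kappa <= z].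
have far_compact : compact far.
  have far_closed : closed far.
    apply: preimage_closed; last exact: closed_ge.
    by move=> p _; exact: ce.2.
  exact: (subclosed_compact far_closed (compact_setX cX cX)).
pose separated (i : M * nat) :=
  [set p : X * X | i.2.+1%:R^-1 < d (act i.1 p.1) (act i.1 p.2)].
have [||cover _ far_sub] := compact_cover_compact far_compact (D := setT) (f := separated).
- move=> [m j] _; apply: (@open_comp _ _ (fun p : X * X => d (act m p.1) (act m p.2))
    [set z : R | j.+1%:R^-1 < z]); last exact: open_gt.
  move=> p _; apply: (@continuous_comp _ _ _ (fun p : X * X => (act m p.1, act m p.2))
    (fun q : X * X => d q.1 q.2)); last exact: cd.2.
  apply: cvg_pair; apply: continuous_comp; by [exact: cvg_fst|exact: cvg_snd|exact: cact].
- move=> [x y] far_xy; have [m dm] : exists m, 0 < d (act m x) (act m y).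
    have [[e0 _ _] _] := ce.
    apply: gd => exy; move: far_xy; rewrite /far /= exy e0.
    by rewrite leNgt kappa0.
  exists (m, Num.truncn (d (act m x) (act m y))^-1) => //; rewrite /separated /=.
  by rewrite invf_plt ?posrE // truncnS_gt.
exists [seq i.1 | i <- cover], (\max_(i <- cover) i.2).+1%:R^-1 => // x y close.
rewrite ltNge; apply/negP => far_xy; have [i icover /= sep] := far_sub (x, y) far_xy.
have := lt_trans sep (close i.1 (map_f _ icover)).
rewrite ltf_pV2 ?posrE // ltr_nat ltnS leqNgt => /negP; apply.
by rewrite ltnS (@leq_bigmax_seq _ _ xpredT (fun j => j.2)).
Qed.

End ContinuousPseudometric.

Lemma sumr_const_seq (R : nmodType) (T : Type) (s : seq T) (x : R) :
  \sum_(k <- s) x = x *+ size s.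
Proof. by rewrite big_const_seq count_predT iter_addr addr0. Qed.

Section Counting.
Variables (R : realType) (D : finType).

Lemma card_or_le (P Q : pred D) : (#|[pred v | P v || Q v]| <= #|P| + #|Q|)%N.
Proof. by rewrite -cardUI leq_addr. Qed.

Lemma card_has_le (T : Type) (ks : seq T) (P : T -> pred D) :
  (#|[pred v | has (P^~ v) ks]| <= \sum_(k <- ks) #|P k|)%N.
Proof.
elim: ks => [|k ks IH]; first by rewrite big_nil leqn0; apply/eqP/eq_card0.
by rewrite big_cons; apply: leq_trans (leq_add (leqnn _) IH); exact: card_or_le.
Qed.

Lemma card_preim_le (s : D -> D) (P : pred D) (Dl : nat) :
  (forall w, #|[pred v | s v == w]| <= Dl)%N -> (#|[pred v | P (s v)]| <= #|P| * Dl)%N.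
Proof.
move=> fibre_le; rewrite -[X in (X <= _)%N]sum1_card (partition_big s P) //=.
rewrite -sum_nat_const; apply: leq_sum => w Pw.
rewrite (eq_bigl (fun v => s v == w)) ?sum1_card ?fibre_le // => v.
by rewrite inE; case: eqP => [->|]; rewrite ?Pw ?andbF.
Qed.

Lemma sumr_sqr_le_card (a : D -> R) (P : pred D) (kappa B : R) :
  0 <= kappa -> (forall v, 0 <= a v <= B) -> (forall v, ~~ P v -> a v <= kappa) ->
  \sum_v a v ^+ 2 <= #|D|%:R * kappa ^+ 2 + #|P|%:R * B ^+ 2.
Proof.
move=> kappa0 a_bnd a_good; rewrite (bigID P) /= addrC lerD //.
  apply: le_trans (_ : \sum_(v | ~~ P v) kappa ^+ 2 <= _).
    apply: ler_sum => v /a_good av; have /andP[a0 _] := a_bnd v.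
    by rewrite lerXn2r ?nnegrE.
  rewrite big_mkcond /= mulr_natl -sumr_const; apply: ler_sum => v _.
  by case: ifP => // _; exact: sqr_ge0.
rewrite mulr_natl -(sumr_const P); apply: ler_sum => v _.
by have /andP[a0 aB] := a_bnd v; rewrite lerXn2r ?nnegrE // (le_trans a0).
Qed.

Section Rho2.
Variables (X : Type) (rho : X -> X -> R) (phi psi : D -> X).
Let sqr_sum := \sum_v rho (phi v) (psi v) ^+ 2.

Lemma rho2_sqr : rho2 rho phi psi ^+ 2 = #|D|%:R^-1 * sqr_sum.
Proof.
by rewrite sqr_sqrtr // mulr_ge0 ?invr_ge0 ?ler0n ?sumr_ge0 // => v _; exact: sqr_ge0.
Qed.

Lemma rho2_le delta : 0 <= delta -> sqr_sum <= #|D|%:R * delta ^+ 2 ->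
  rho2 rho phi psi <= delta.
Proof.
move=> delta0 sum_le; rewrite -(ler_pXn2r (_ : 0 < 2)%N) ?nnegrE ?sqrtr_ge0 //.
rewrite rho2_sqr; have [D0|Dpos] := posnP #|D|.
  by rewrite D0 invr0 mul0r sqr_ge0.
by rewrite ler_pdivrMl ?ltr0n.
Qed.

Lemma card_le_rho2 c delta : (forall x y, 0 <= rho x y) -> 0 < c ->
  rho2 rho phi psi <= delta ->
  #|[pred v | c <= rho (phi v) (psi v)]|%:R * c ^+ 2 <= #|D|%:R * delta ^+ 2.
Proof.
move=> rho0 c0 rho2_le_delta.
have sum_le : sqr_sum <= #|D|%:R * delta ^+ 2.
  have [D0|Dpos] := posnP #|D|.
    by rewrite /sqr_sum big_pred0 ?D0 ?mul0r // => v; have := card0_eq D0 v.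
  rewrite -ler_pdivrMl ?ltr0n // -rho2_sqr lerXn2r ?nnegrE ?sqrtr_ge0 //.
  exact: le_trans (sqrtr_ge0 _) rho2_le_delta.
apply: le_trans sum_le; rewrite mulr_natl -sumr_const /sqr_sum.
rewrite [leRHS](bigID [pred v | c <= rho (phi v) (psi v)]) /=.
apply: ler_wpDr; first by apply: sumr_ge0 => v _; exact: sqr_ge0.
by apply: ler_sum => v cv; rewrite lerXn2r ?nnegrE // ltW.
Qed.

End Rho2.

Lemma card_le_weighted_fibres (J T : finType) (g : J -> T) (w : T -> R) (r : R) :
  (forall f, 0 <= w f) -> (forall j, 1 <= w (g j)) ->
  (forall f, #|[pred j | g j == f]|%:R <= r) -> #|J|%:R <= r * \sum_f w f.
Proof.
move=> w0 w1 fibre_le.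
have -> : #|J| = (\sum_f #|[pred j | g j == f]|)%N.
  rewrite -sum1_card (partition_big g xpredT) //=; apply: eq_bigr => f _.
  by rewrite -sum1_card; apply: eq_bigl => j; rewrite !inE.
rewrite natr_sum mulr_sumr; apply: ler_sum => f _.
have r0 : 0 <= r := le_trans (ler0n _ _) (fibre_le f).
case: (pickP [pred j | g j == f]) => [j /eqP gj | no_j].
  by apply: le_trans (fibre_le f) _; rewrite ler_peMr // -gj.
by rewrite eq_card0 // mulr_ge0.
Qed.

Lemma sum_ffun_support_weight (T : finType) (t : R) :
  \sum_(f : {ffun D -> option T}) t ^+ #|[pred v | f v != None]| = (1 + #|T|%:R * t) ^+ #|D|.
Proof.
pose weight (j : option T) := if j is Some _ then t else 1.
have weight_sum : \sum_j weight j = 1 + #|T|%:R * t.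
  rewrite (bigD1 None) //= (eq_bigr (fun _ => t)) => [|[]//].
  by rewrite sumr_const cardC1 card_option mulr_natl.
have support_weight (f : {ffun D -> option T}) :
    t ^+ #|[pred v | f v != None]| = \prod_v weight (f v).
  rewrite -prodr_const [RHS](bigID [pred v | f v != None]) /=.
  rewrite [X in _ = _ * X]big1 ?mulr1 => [|v]; last by case: (f v).
  by rewrite [RHS]big_mkcond [LHS]big_mkcond; apply: eq_bigr => v _; rewrite inE; case: (f v).
under eq_bigr do rewrite support_weight.
rewrite -(bigA_distr_bigA (fun _ => weight)) /= (eq_bigr _ (fun v _ => weight_sum)).
by rewrite prodr_const.
Qed.

Lemma le_rhoinf (X : Type) (rho : X -> X -> R) (phi psi : D -> X) v :
  rho (phi v) (psi v) <= rhoinf rho phi psi.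
Proof. exact: (le_bigmax _ (fun v => rho (phi v) (psi v))). Qed.

Lemma le_rhoinf_exists (X : Type) (rho : X -> X -> R) (phi psi : D -> X) c : 0 < c ->
  c <= rhoinf rho phi psi -> exists v, c <= rho (phi v) (psi v).
Proof.
move=> c0 c_le; apply: contrapT => none; move: c_le; apply/negP; rewrite -ltNge.
apply: bigmax_lt => // v _; rewrite ltNge; apply/negP => c_le; exact: none (ex_intro _ v c_le).
Qed.

End Counting.

Section SeparatedSets.
Variables (R : realType) (T : Type) (d : T -> T -> R) (eps : R).

Lemma sep_number_ge0 (Z : set T) : (0 <= sep_number d eps Z)%E.
Proof.
apply: ereal_sup_ubound; exists 0%N => //=.
pose empty_family (j : 'I_0) : T := match j with Ordinal _ j0 => False_rect _ (notF j0) end.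
by exists empty_family; split; case.
Qed.

Lemma le_sep_number (Z : set T) n (f : 'I_n -> T) : injective f -> (forall j, Z (f j)) ->
  (forall j k, j != k -> eps <= d (f j) (f k)) -> (n%:R%:E <= sep_number d eps Z)%E.
Proof. by move=> f_inj Zf f_sep; apply: ereal_sup_ubound; exists n => //; exists f. Qed.

Lemma sep_numberS (Z1 Z2 : set T) :
  Z1 `<=` Z2 -> (sep_number d eps Z1 <= sep_number d eps Z2)%E.
Proof.
move=> Z12; apply: ereal_sup_le => _ [n [f [f_inj Zf f_sep]] <-].
by exists n => //; exists f; split => // j; apply: Z12.
Qed.

End SeparatedSets.

Lemma exprn_expR_ge1 (R : realType) (k : nat) (b t : R) : 0 < t -> t <= 1 -> k%:R <= b ->
  1 <= t ^+ k * expR (- (b * ln t)).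
Proof.
move=> t0 t1 kb; rewrite -[t in t ^+ k]lnK ?posrE // -expRM_natl -expRD.
rewrite -[X in X <= _]expR0 ler_expR; have : ln t <= 0 by exact: ln_le0.
nra.
Qed.

Lemma exists_small_pos (R : realType) (A b : R) : 0 < b -> 0 <= A ->
  exists x, [/\ 0 < x, x <= 1 & A * x <= b].
Proof.
move=> b0 A0; have A1 : 0 < A + 1 by lra.
exists (Num.min 1 (b / (A + 1))); split; first by rewrite lt_min ltr01 divr_gt0.
  by rewrite ge_min lexx.
apply: le_trans (_ : A * (b / (A + 1)) <= b).
  by rewrite ler_wpM2l // ge_min lexx orbT.
by rewrite mulrA ler_pdivrMr // mulrC ler_pM2l //; lra.
Qed.

Section EquivarianceDefect.
Variables (R : realType) (M : monoidType) (X : Type) (act : M -> X -> X).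
Hypothesis actM : forall (m1 m2 : M) x, act (m1 * m2)%g x = act m1 (act m2 x).
Variables (D : finType) (s : M -> D -> D) (d : X -> X -> R).
Hypothesis pd : is_pseudometric d.
Variables (ks : seq M) (eta : R) (phi : D -> X) (m : M).
Hypothesis eta0 : 0 < eta.

Definition nonequivariant_at k w := eta / 2 <= d (phi (s k w)) (act k (phi w)).

Definition defect_at v := has (fun k => [|| nonequivariant_at k (s m v),
  s (k * m)%g v != s k (s m v) | nonequivariant_at (k * m)%g v]) ks.

Lemma dist_act_lt_of_not_defect v : ~~ defect_at v ->
  forall k, k \in ks -> d (act k (phi (s m v))) (act k (act m (phi v))) < eta.
Proof.
move=> /hasPn good k kks; move: (good k kks); rewrite !negb_or -!ltNge.
move=> /and3P[near_sm]; rewrite negbK => /eqP s_mul near_km; rewrite -actM.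
have [_ dC dtri] := pd; rewrite s_mul in near_km.
apply: le_lt_trans (dtri _ (phi (s k (s m v))) _) _; rewrite dC; lra.
Qed.

Lemma card_defect_le (Dl : nat) (delta tau : R) :
  (forall w, #|[pred v | s m v == w]| <= Dl)%N ->
  Dl.+1%:R * delta ^+ 2 <= tau * (eta / 2) ^+ 2 ->
  (forall k, k \in ks -> rho2 d (fun v => phi (s k v)) (fun v => act k (phi v)) <= delta) ->
  (forall k, k \in ks -> rho2 d (fun v => phi (s (k * m)%g v))
    (fun v => act (k * m)%g (phi v)) <= delta) ->
  (forall k, k \in ks -> #|[pred v | s (k * m)%g v != s k (s m v)]|%:R <= #|D|%:R * tau) ->
  #|defect_at|%:R <= 2 * #|D|%:R * tau *+ size ks.
Proof.
move=> fibre_le delta_small rho2_k rho2_km mismatch_small.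
apply: le_trans (_ : (\sum_(k <- ks) #|[pred v | [|| nonequivariant_at k (s m v),
  s (k * m)%g v != s k (s m v) | nonequivariant_at (k * m)%g v]]|)%:R <= _).
  by rewrite ler_nat; exact: card_has_le.
rewrite natr_sum -sumr_const_seq big_seq [leRHS]big_seq; apply: ler_sum => k kks.
pose far_k := [pred w | nonequivariant_at k w].
pose far_km := [pred w | nonequivariant_at (k * m)%g w].
pose mismatch := [pred v | s (k * m)%g v != s k (s m v)].
have card_or3 : (#|[pred v | [|| far_k (s m v), mismatch v | far_km v]]| <=
    #|[pred v | far_k (s m v)]| + #|mismatch| + #|far_km|)%N.
  apply: leq_trans (card_or_le [pred v | far_k (s m v)] [pred v | mismatch v || far_km v]) _.
  by rewrite -addnA leq_add2l; exact: card_or_le.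
apply: le_trans (_ : (#|far_k| * Dl + #|mismatch| + #|far_km|)%:R <= _).
  by rewrite ler_nat (leq_trans card_or3) // !leq_add2r card_preim_le.
have ge0 := pseudometric_ge0 pd; have eta20 : 0 < eta / 2 by rewrite divr_gt0.
have card_k : #|far_k|%:R * (eta / 2) ^+ 2 <= #|D|%:R * delta ^+ 2.
  exact: card_le_rho2 ge0 eta20 (rho2_k k kks).
have card_km : #|far_km|%:R * (eta / 2) ^+ 2 <= #|D|%:R * delta ^+ 2.
  exact: card_le_rho2 ge0 eta20 (rho2_km k kks).
have := mismatch_small k kks; rewrite -/mismatch !natrD natrM => card_mismatch.
have eta2 : 0 < (eta / 2) ^+ 2 by rewrite exprn_gt0.
have : (#|far_k|%:R * Dl%:R + #|far_km|%:R) * (eta / 2) ^+ 2 <=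
    #|D|%:R * tau * (eta / 2) ^+ 2.
  have := ler_wpM2r (ler0n R Dl) card_k; have := ler_wpM2l (ler0n R #|D|) delta_small.
  rewrite -natr1; nra.
rewrite ler_pM2r //; lra.
Qed.

Lemma rho2_equivariance_le (d' : X -> X -> R) (B delta' tau : R) :
  is_pseudometric d' -> (forall x y, d' x y <= B) -> 0 < delta' -> 0 <= tau ->
  (forall x y, (forall k, k \in ks -> d (act k x) (act k y) < eta) -> d' x y < delta' / 2) ->
  tau * (4 * B ^+ 2 * (size ks).+1%:R) = delta' ^+ 2 ->
  #|defect_at|%:R <= 2 * #|D|%:R * tau *+ size ks ->
  rho2 d' (fun v => phi (s m v)) (fun v => act m (phi v)) <= delta'.
Proof.
move=> pd' d'_le delta'0 tau0 control tau_def card_defect.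
apply: rho2_le => /=; first exact: ltW.
apply: le_trans (sumr_sqr_le_card (P := defect_at) (kappa := delta' / 2) (B := B) _ _ _) _.
- by rewrite ltW // divr_gt0.
- by move=> v; rewrite (pseudometric_ge0 pd') d'_le.
- by move=> v /dist_act_lt_of_not_defect close; apply/ltW/control.
rewrite -[2 * _ * _ *+ _]mulr_natr in card_defect.
have := ler_wpM2r (sqr_ge0 B) card_defect.
have : 0 <= #|D|%:R * tau * B ^+ 2 by apply: mulr_ge0; [exact: mulr_ge0|exact: sqr_ge0].
have : #|D|%:R * delta' ^+ 2 = 4 * (#|D|%:R * tau * B ^+ 2) * ((size ks)%:R + 1).
  by rewrite -tau_def natr1; ring.
have : 0 <= #|D|%:R :> R := ler0n _ _.
nra.
Qed.

End EquivarianceDefect.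

Section Colouring.
Variables (R : realType) (M : monoidType) (X : Type) (act : M -> X -> X).
Variables (D : finType) (s : M -> D -> D) (d d' : X -> X -> R).
Hypothesis pd' : is_pseudometric d'.
Variables (ks : seq M) (eta eps : R).
Hypothesis eta0 : 0 < eta.
Hypothesis eps0 : 0 < eps.
Hypothesis control :
  forall x y, (forall k, k \in ks -> d' (act k x) (act k y) < eta) -> d x y < eps.
Variables (T : finType) (cell : X -> T).
Hypothesis cell_small : forall x y, cell x = cell y -> d x y < eps.

Definition unstable_at (phi : D -> X) v :=
  has (fun k => eta / 3 <= d' (phi (s k v)) (act k (phi v))) ks.

(* [None] marks the points where [phi] is [eta / 3]-equivariant along [ks];
   there, [d]-separation already forces [d']-separation. *)
Definition colouring (phi : D -> X) : {ffun D -> option T} :=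
  [ffun v => if unstable_at phi v then Some (cell (phi v)) else None].

Lemma colouring_separated phi psi : colouring phi = colouring psi ->
  eps <= rhoinf d phi psi -> eta / 3 <= rhoinf d' phi psi.
Proof.
move=> same_col /(le_rhoinf_exists eps0) [v far_v].
have := congr1 (fun f : {ffun D -> option T} => f v) same_col; rewrite /= !ffunE.
have [uphi|sphi] := boolP (unstable_at phi v); have [upsi|spsi] := boolP (unstable_at psi v);
  rewrite ?uphi ?upsi ?(negbTE sphi) ?(negbTE spsi) //.
  by case=> /cell_small; rewrite ltNge far_v.
move=> _.
have [k kks] : exists2 k, k \in ks & eta <= d' (act k (phi v)) (act k (psi v)).
  apply: contrapT => near_all; move: far_v; apply/negP; rewrite -ltNge; apply: control.
  by move=> k kks; rewrite ltNge; apply/negP => far_k; apply: near_all; exists k.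
move: sphi spsi => /hasPn/(_ k kks) /= + /hasPn/(_ k kks) /=; rewrite -!ltNge.
move=> near_phi near_psi far_k; apply: le_trans (le_rhoinf d' phi psi (s k v)).
have [_ dC dtri] := pd'.
have := dtri (act k (phi v)) (phi (s k v)) (act k (psi v)).
have := dtri (phi (s k v)) (psi (s k v)) (act k (psi v)).
rewrite (dC (act k (phi v)) (phi (s k v))); lra.
Qed.

Lemma card_colouring_support phi delta :
  (forall k, k \in ks -> rho2 d' (fun v => phi (s k v)) (fun v => act k (phi v)) <= delta) ->
  #|[pred v | colouring phi v != None]|%:R * (eta / 3) ^+ 2 <=
    (size ks)%:R * (#|D|%:R * delta ^+ 2).
Proof.
move=> rho2_k.
have -> : #|[pred v | colouring phi v != None]| = #|unstable_at phi|.
  by apply: eq_card => v; rewrite !inE ffunE; case: ifP.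
pose far k := [pred v | eta / 3 <= d' (phi (s k v)) (act k (phi v))].
apply: le_trans (_ : (\sum_(k <- ks) #|far k|)%:R * (eta / 3) ^+ 2 <= _).
  by rewrite ler_wpM2r ?sqr_ge0 // ler_nat; exact: card_has_le.
rewrite natr_sum mulr_suml [leRHS]mulr_natl -sumr_const_seq.
rewrite big_seq [leRHS]big_seq; apply: ler_sum => k kks.
by apply: card_le_rho2 (rho2_k k kks); [exact: pseudometric_ge0|rewrite divr_gt0].
Qed.

Lemma sep_number_le_colouring (S : set (D -> X)) (delta t : R) : 0 < t -> t <= 1 ->
  S `<=` MapSet act d' [set` ks] delta s ->
  (sep_number (@rhoinf R X d D) eps S <=
    (((1 + #|T|%:R * t) *
      expR (- ((size ks)%:R * delta ^+ 2 / (eta / 3) ^+ 2 * ln t))) ^+ #|D|)%:E *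
    sep_number (@rhoinf R X d' D) (eta / 3) S)%E.
Proof.
move=> t0 t1 S_sub; apply: ge_ereal_sup => _ [k [e [e_inj eS e_sep]] <-].
(* Weight a colouring [f] by [t ^+ |supp f|]: colour classes are
   [d']-separated, and a colouring that occurs has support at most [#|D| * b],
   hence weight at least one after rescaling by [expR (- (#|D| * b * ln t))]. *)
set b := _ / _; set C := _ ^+ #|D|.
have C0 : 0 < C by rewrite exprn_gt0 // mulr_gt0 ?expR_gt0 // ltr_pwDl // mulr_ge0 // ltW.
have := sep_number_ge0 (@rhoinf R X d' D) (eta / 3) S.
case Er: sep_number => [r| |] // r0; last by rewrite gt0_muley ?lte_fin // leey.
rewrite -EFinM lee_fin -[k in k%:R]card_ord mulrC.
have -> : C = \sum_(f : {ffun D -> option T})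
    t ^+ #|[pred v | f v != None]| * expR (- (#|D|%:R * b * ln t)).
  rewrite -mulr_suml sum_ffun_support_weight /C exprMn -expRM_natl.
  by congr (_ * expR _); ring.
apply: (card_le_weighted_fibres (g := fun j => colouring (e j))) => [f|j|f].
- by rewrite mulr_ge0 ?expR_ge0 // exprn_ge0 // ltW.
- apply: exprn_expR_ge1 => //; rewrite /b mulrA ler_pdivlMr ?exprn_gt0 ?divr_gt0 //.
  rewrite [leRHS]mulrCA.
  by apply: card_colouring_support => k' k'ks; exact: (S_sub _ (eS j)).
pose fibre := [pred j | colouring (e j) == f].
rewrite -lee_fin -Er; apply: (le_sep_number (f := fun i => e (enum_val (A := fibre) i))).
- by move=> i i' /e_inj /enum_val_inj.
- by move=> i; exact: eS.
move=> i i' ii'; apply: colouring_separated.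
  by have := enum_valP i; have := enum_valP i'; rewrite !inE => /eqP -> /eqP ->.
by apply: e_sep; apply: contra ii' => /eqP /enum_val_inj ->.
Qed.

End Colouring.

Section CompactSystem.
Variables (R : realType) (M : monoidType) (X : topologicalType) (act : M -> X -> X).
Hypothesis cX : compact [set: X].
Hypothesis cact : forall m, continuous (act m).

Lemma sep_number_comparison (d d' : X -> X -> R) :
  continuous_pseudometric d -> continuous_pseudometric d' ->
  dynamically_generating act d' -> forall eps, 0 < eps ->
  exists2 eps', 0 < eps' & exists ks : seq M, forall th, 0 < th ->
  exists delta c, [/\ 0 < delta, 0 < c, ln c <= th &
    forall (D : finType) (s : M -> D -> D) (S : set (D -> X)),
    S `<=` MapSet act d' [set` ks] delta s ->
    (sep_number (@rhoinf R X d D) eps S <=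
      (c ^+ #|D|)%:E * sep_number (@rhoinf R X d' D) eps' S)%E].
Proof.
move=> cd cd' gd' eps eps0.
have [ks [eta eta0 control]] := dynamically_generating_control cd' cX cact gd' cd eps0.
have [N [cell cell_small]] := compact_pseudometric_partition cd cX eps0.
exists (eta / 3); first by rewrite divr_gt0.
exists ks => th th0; have th20 : 0 < th / 2 by rewrite divr_gt0.
have [t [t0 t1 Nt_small]] := exists_small_pos th20 (ler0n R #|'I_N|).
pose A := (size ks)%:R * - ln t / (eta / 3) ^+ 2.
have A0 : 0 <= A by rewrite /A divr_ge0 ?sqr_ge0 // mulr_ge0 // oppr_ge0 ln_le0.
have [delta [delta0 delta1 delta_small]] := exists_small_pos th20 A0.
have Nt0 : 0 < 1 + #|'I_N|%:R * t by rewrite ltr_pwDl // mulr_ge0 // ltW.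
exists delta, ((1 + #|'I_N|%:R * t) *
  expR (- ((size ks)%:R * delta ^+ 2 / (eta / 3) ^+ 2 * ln t))); split => //.
- by rewrite mulr_gt0 ?expR_gt0.
- rewrite lnM ?posrE ?expR_gt0 // expRK (splitr th) lerD //.
    apply: le_trans (le_ln1Dx _) Nt_small.
    by apply: lt_le_trans (_ : -1 < 0) _; rewrite ?oppr_lt0 // mulr_ge0 // ltW.
  apply: le_trans delta_small; rewrite (_ : - _ = A * delta ^+ 2); last by rewrite /A; ring.
  by rewrite ler_wpM2l // expr2 ler_piMr //; exact: ltW.
- move=> D s S S_sub.
  exact: (sep_number_le_colouring cd'.1 eta0 eps0 control cell_small t0 t1 S_sub).
Qed.

End CompactSystem.

Definition net_eventually (I : Type) (le : I -> I -> Prop) (P : I -> Prop) :=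
  exists i0, forall i, le i0 i -> P i.

Lemma net_eventually_impl (I : Type) (le : I -> I -> Prop) (P Q : I -> Prop) :
  (forall i, P i -> Q i) -> net_eventually le P -> net_eventually le Q.
Proof. by move=> PQ [i0 P_after]; exists i0 => i /P_after /PQ. Qed.

Section DirectedNets.
Variables (R : realType) (I : Type) (le : I -> I -> Prop).
Hypothesis dir : directed_set le.

Lemma net_eventually_seq (T : eqType) (ts : seq T) (P : T -> I -> Prop) :
  (forall t, t \in ts -> net_eventually le (P t)) ->
  net_eventually le (fun i => forall t, t \in ts -> P t i).
Proof.
have [[i _] _ le_tr up] := dir.
elim: ts => [|t ts IH] evP; first by exists i.
have [i1 P1] := evP t (mem_head _ _).
have [i2 P2] := IH (fun u uts => evP u (mem_behead (s := t :: ts) uts)).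
have [j [i1j i2j]] := up i1 i2; exists j => k jk u; rewrite in_cons => /predU1P[->|uts].
  exact/P1/(le_tr _ _ _ i1j jk).
exact: P2 (le_tr _ _ _ i2j jk) _ uts.
Qed.

Local Open Scope ereal_scope.

Lemma net_limsup_le_add (a b : I -> \bar R) (th : R) :
  net_eventually le (fun i => a i <= th%:E + b i) ->
  net_limsup le a <= th%:E + net_limsup le b.
Proof.
have [_ _ le_tr up] := dir; move=> [i1 a_le].
rewrite addeC -leeBlDr //; apply: le_ereal_inf_tmp => _ [i0 _ <-].
have [i2 [i12 i02]] := up i1 i0.
rewrite leeBlDr //; apply: le_trans (_ : ereal_sup [set a i | i in [set i | le i2 i]] <= _).
  by apply: ereal_inf_lbound; exists i2.
apply: ge_ereal_sup => _ [i i2i <-]; apply: le_trans (a_le _ (le_tr _ _ _ i12 i2i)) _.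
by rewrite addeC leeD2r //; apply: ereal_sup_ubound; exists i => //; exact: le_tr i2i.
Qed.

End DirectedNets.

Lemma elog_le_lnM (R : realType) (x y : \bar R) (C : R) : 0 < C ->
  (x <= C%:E * y)%E -> (elog x <= (ln C)%:E + elog y)%E.
Proof.
move=> C0; case: y => [r| |] /=.
- case: x => [u| |] //= => [|_]; last by rewrite leNye.
  rewrite -EFinM lee_fin => u_le; case: ifP => u0; last by rewrite leNye.
  have r0 : 0 < r by rewrite -(pmulr_rgt0 _ C0); exact: lt_le_trans u0 u_le.
  by rewrite r0 -EFinD lee_fin -lnM ?posrE // ler_ln ?posrE // mulr_gt0.
- by rewrite leey.
- by rewrite gt0_muleNy ?lte_fin // leeNy_eq => /eqP ->.
Qed.

Lemma normalized_elog_le (R : realType) (x y : \bar R) (c th : R) (n : nat) :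
  (0 < n)%N -> 0 < c -> ln c <= th -> (x <= (c ^+ n)%:E * y)%E ->
  ((n%:R^-1)%:E * elog x <= th%:E + (n%:R^-1)%:E * elog y)%E.
Proof.
move=> n0 c0 lnc_le /(elog_le_lnM (exprn_gt0 n c0)) elog_le.
apply: le_trans (lee_wpmul2l _ elog_le) _; first by rewrite lee_fin invr_ge0.
rewrite muleDr // -EFinM leeD2r // lee_fin lnXn // -[ln c *+ n]mulr_natr.
by rewrite mulrCA mulVf ?mulr1 // pnatr_eq0 -lt0n.
Qed.

Section SoficApproximation.
Variables (R : realType) (M : monoidType) (X : topologicalType) (act : M -> X -> X).
Hypothesis cX : compact [set: X].
Hypothesis cact : forall m, continuous (act m).
Hypothesis actM : forall (m1 m2 : M) x, act (m1 * m2)%g x = act m1 (act m2 x).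
(* Keep the index [i] of [sigma i] explicit. *)
Unset Implicit Arguments.
Variables (I : Type) (le : I -> I -> Prop) (D : I -> finType)
  (sigma : forall i, M -> D i -> D i).
Set Implicit Arguments.
Hypothesis hs : strong_sofic_approx R le sigma.

Lemma eventually_card_mismatch_le (ks fs : seq M) (tau : R) : 0 < tau ->
  net_eventually le (fun i => forall k m, k \in ks -> m \in fs ->
    #|[pred v | sigma i (k * m)%g v != sigma i k (sigma i m v)]|%:R <= #|D i|%:R * tau).
Proof.
move=> tau0; have [dir [Dpos _] ham_lim _ _] := hs.
have : net_eventually le (fun i => forall p, p \in [seq (k, m) | k <- ks, m <- fs] ->
    d_ham R (sigma i (p.1 * p.2)%g) (sigma i p.1 \o sigma i p.2) < tau).
  apply: (net_eventually_seq dir) => p _; have [i0 near_i0] := ham_lim p.1 p.2 tau tau0.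
  by exists i0 => i /near_i0; rewrite subr0; apply: le_lt_trans (ler_norm _).
apply: net_eventually_impl => i ham_small k m kks mfs.
have := ham_small (k, m) (allpairs_f (fun k m => (k, m)) kks mfs).
by rewrite /d_ham /= ltr_pdivrMr ?ltr0n ?Dpos // mulrC => /ltW.
Qed.

Lemma mapset_eventually_sub (d d' : X -> X -> R) :
  continuous_pseudometric d -> dynamically_generating act d ->
  continuous_pseudometric d' -> forall (F' : set M) (delta' : R),
  finite_set F' -> 0 < delta' -> exists F : set M, exists delta : R,
  [/\ finite_set F, 0 < delta & net_eventually le
    (fun i => MapSet act d F delta (sigma i) `<=` MapSet act d' F' delta' (sigma i))].
Proof.
move=> cd gd cd' F' delta' finF' delta'0.
have [B B0 d'_le] := continuous_pseudometric_bounded cd' cX.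
have kappa0 : 0 < delta' / 2 by rewrite divr_gt0.
have [ks [eta eta0 control]] :=
  dynamically_generating_control cd cX cact gd cd' kappa0.
have [fs fsE] := (finite_seqP F').1 finF'.
have [_ _ _ _ preim_bnd] := hs.
have [Dl [_ fibre_le]] := preim_bnd F' finF'.
(* Each defect point contributes at most [B ^+ 2] to the sum of squares
   behind [rho2]; [tau] keeps their total below half of [#|D| * delta' ^+ 2]. *)
pose tau := delta' ^+ 2 / (4 * B ^+ 2 * (size ks).+1%:R).
have tau0 : 0 < tau by rewrite divr_gt0 ?exprn_gt0 // !mulr_gt0 ?exprn_gt0.
have tau_def : tau * (4 * B ^+ 2 * (size ks).+1%:R) = delta' ^+ 2.
  by rewrite divfK // gt_eqF // !mulr_gt0 ?exprn_gt0.
have [delta [delta0 delta1 delta_small]] := exists_small_pos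
  (mulr_gt0 tau0 (exprn_gt0 2 (divr_gt0 eta0 (ltr0n R 2)))) (ler0n R Dl.+1).
have delta_sqr_small : Dl.+1%:R * delta ^+ 2 <= tau * (eta / 2) ^+ 2.
  apply: le_trans delta_small; rewrite ler_wpM2l // expr2 ler_piMr //; exact: ltW.
pose F := [set` ks ++ [seq (k * m)%g | k <- ks, m <- fs]].
exists F, delta; split => //; first exact: finite_seq.
apply: net_eventually_impl (eventually_card_mismatch_le ks fs tau0).
move=> i mismatch_small phi phi_in m F'm; have mfs : m \in fs by rewrite fsE in F'm.
have rho2_k k : k \in ks ->
    rho2 d (fun v => phi (sigma i k v)) (fun v => act k (phi v)) <= delta.
  by move=> kks; apply: phi_in; rewrite /F /= mem_cat kks.
have rho2_km k : k \in ks ->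
    rho2 d (fun v => phi (sigma i (k * m)%g v)) (fun v => act (k * m)%g (phi v)) <= delta.
  move=> kks; apply: phi_in; rewrite /F /= mem_cat; apply/orP; right.
  exact: (allpairs_f (fun k m => (k * m)%g) kks mfs).
have card_defect := card_defect_le cd.1 eta0 (fibre_le i m ^~ F'm) delta_sqr_small
  rho2_k rho2_km (fun k kks => mismatch_small k m kks mfs).
exact: (rho2_equivariance_le actM cd.1 cd'.1 d'_le delta'0 (ltW tau0) control tau_def
  card_defect).
Qed.

Lemma sofic_entropy_le (d d' : X -> X -> R) :
  continuous_pseudometric d -> dynamically_generating act d ->
  continuous_pseudometric d' -> dynamically_generating act d' ->
  (sofic_entropy act le sigma d <= sofic_entropy act le sigma d')%E.
Proof.
move=> cd gd cd' gd'; have [dir [Dpos _] _ _ _] := hs.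
apply: ge_ereal_sup => _ [eps eps0 <-].
have [eps' eps'0 [ks compare]] := sep_number_comparison cX cact cd cd' gd' eps0.
apply: le_ereal_sup_tmp; eexists; first by exists eps'.
apply: le_ereal_inf_tmp => _ [F' finF' <-]; apply: le_ereal_inf_tmp => _ [delta' delta'0 <-].
apply/lee_addgt0Pr => th th0.
have [delta2 [c [delta20 c0 lnc_le compare_th]]] := compare th th0.
have [||F [delta [finF delta0 sub_ev]]] := mapset_eventually_sub cd gd cd'
  (F' := F' `|` [set` ks]) (delta' := Num.min delta' delta2).
- by rewrite finite_setU; split => //; exact: finite_seq.
- by rewrite lt_min delta'0.
apply: ge_ereal_inf; eexists; first by exists F.
apply: ge_ereal_inf; eexists; first by exists delta.
rewrite addeC; apply: (net_limsup_le_add dir); apply: net_eventually_impl sub_ev => i sub.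
set S := MapSet act d F delta (sigma i).
have sub_ks : S `<=` MapSet act d' [set` ks] delta2 (sigma i).
  apply: subset_trans sub _ => phi phi_in m ksm.
  by apply: le_trans (phi_in m (or_intror ksm)) _; rewrite ge_min lexx orbT.
have sub_F' : S `<=` MapSet act d' F' delta' (sigma i).
  apply: subset_trans sub _ => phi phi_in m F'm.
  by apply: le_trans (phi_in m (or_introl F'm)) _; rewrite ge_min lexx.
apply: (normalized_elog_le (Dpos i) c0 lnc_le).
apply: le_trans (compare_th _ _ S sub_ks) _; apply: lee_wpmul2l.
  by rewrite lee_fin exprn_ge0 // ltW.
exact: sep_numberS.
Qed.

End SoficApproximation.

Theorem proposition4p6 (R : realType) (M : monoidType) (X : topologicalType)
  (act : M -> X -> X)
  (I : Type) (le : I -> I -> Prop) (D : I -> finType)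
  (sigma : forall i, M -> D i -> D i)
  (rho rho' : X -> X -> R) :
  compact [set: X] ->
  continuous_monoid_action act ->
  infinite_set [set: M] ->
  strongly_sofic R M ->
  strong_sofic_approx R le sigma ->
  continuous_pseudometric rho -> dynamically_generating act rho ->
  continuous_pseudometric rho' -> dynamically_generating act rho' ->
  sofic_entropy act le sigma rho = sofic_entropy act le sigma rho'.
Proof.
move=> cX [cact _ actM] _ _ hs c_rho g_rho c_rho' g_rho'.
by apply/le_anti/andP; split; exact: sofic_entropy_le.
Qed.
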